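(* If $m=2$ and $k=3$, then the kernel of the Spencer operator $\mathcal S^2\colon\operatorname{Hom}(\wedge^2V,\mathfrak a)\to\operatorname{Hom}(\wedge^3V,V)$ is one-dimensional.
   Context: $\mathfrak a=\mathfrak{sl}(2,\mathbb R)\times\mathfrak{gl}(m,\mathbb R)$ acting faithfully on $V=V_k\otimes W$, where $V_k=S^k(\mathbb R^2)$ is the irreducible $(k+1)$-dimensional $\mathfrak{sl}(2,\mathbb R)$-module and $W=\mathbb R^m$ the standard $\mathfrak{gl}(m,\mathbb R)$-module. $\mathcal S^2(\phi)(v_1\wedge v_2\wedge v_3)=-\phi(v_2\wedge v_3)v_1+\phi(v_1\wedge v_3)v_2-\phi(v_1\wedge v_2)v_3$. *)

From mathcomp Require Import all_boot all_order all_algebra.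
From mathcomp Require Import reals mxtens.
Set Implicit Arguments. Unset Strict Implicit. Unset Printing Implicit Defensive.
Import Order.TTheory GRing.Theory Num.Theory.
Local Open Scope ring_scope.

(* Action of X in gl(2,R) on V_k = S^k(R^2), the homogeneous polynomials of
   degree k in x = e1, y = e2, in the basis b_i = x^(k-i) y^i (i = 0..k),
   X acting as a derivation.  Matrices act on column coordinate vectors:
   column i is the coordinate vector of X . b_i.  Here X e1 = X00 e1 + X10 e2,
   X e2 = X01 e1 + X11 e2. *)
Definition symrep (R : pzRingType) (k : nat) (X : 'M[R]_2) : 'M[R]_k.+1 :=
  \matrix_(j < k.+1, i < k.+1)
    (if (j : nat) == i then (k - i)%:R * X ord0 ord0 + (i : nat)%:R * X ord_max ord_max
     else if (j : nat) == i.+1 then (k - i)%:R * X ord_max ord0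
     else if (j : nat).+1 == i then (i : nat)%:R * X ord0 ord_max
     else 0).

(* Elements of a = sl(2,R) x gl(m,R), stored as pairs (X, Y) with \tr X = 0. *)
Definition aelt (R : pzRingType) (m : nat) := ('M[R]_2 * 'M[R]_m)%type.
Definition in_a (R : pzRingType) (m : nat) (x : aelt R m) : Prop := \tr x.1 = 0.

Definition Vdim (k m : nat) : nat := (k.+1 * m)%N.

Definition rhoV (R : comPzRingType) (k m : nat) (x : aelt R m) : 'M[R]_(Vdim k m) :=
  @tensmx R _ _ _ _ (symrep k x.1) (1%:M : 'M[R]_m)
  + @tensmx R _ _ _ _ (1%:M : 'M[R]_k.+1) x.2.

Definition is_Hom2 (R : comPzRingType) (k m : nat)
    (phi : 'cV[R]_(Vdim k m) -> 'cV[R]_(Vdim k m) -> aelt R m) : Prop :=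
  [/\ (forall u v, in_a (phi u v)),
      (forall (c : R) u u' v, phi (c *: u + u') v = c *: phi u v + phi u' v),
      (forall (c : R) u v v', phi u (c *: v + v') = c *: phi u v + phi u v')
    & (forall u, phi u u = 0)].

Definition spencer2 (R : comPzRingType) (k m : nat)
    (phi : 'cV[R]_(Vdim k m) -> 'cV[R]_(Vdim k m) -> aelt R m)
    (v1 v2 v3 : 'cV[R]_(Vdim k m)) : 'cV[R]_(Vdim k m) :=
  - (rhoV k (phi v2 v3) *m v1) + rhoV k (phi v1 v3) *m v2 - rhoV k (phi v1 v2) *m v3.

Definition in_ker_spencer2 (R : comPzRingType) (k m : nat)
    (phi : 'cV[R]_(Vdim k m) -> 'cV[R]_(Vdim k m) -> aelt R m) : Prop :=
  is_Hom2 phi /\ forall v1 v2 v3, spencer2 phi v1 v2 v3 = 0.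

Definition one_dimensional (R : pzRingType) (A B : Type) (M : lmodType R)
    (K : (A -> B -> M) -> Prop) : Prop :=
  exists phi0, [/\ K phi0, (exists u v, phi0 u v <> 0)
    & forall phi, K phi -> exists c : R, forall u v, phi u v = c *: phi0 u v].

From mathcomp Require Import all_boot all_order all_algebra.
From mathcomp Require Import reals mxtens ring.
Set Implicit Arguments. Unset Strict Implicit. Unset Printing Implicit Defensive.
Import Order.TTheory GRing.Theory Num.Theory.
Local Open Scope ring_scope.

(* Write e_0, ..., e_7 for the standard basis of V = R^8.  An alternating bilinear
   phi : V x V -> a is determined by the 28 * 8 coordinates of the phi(e_i, e_j),
   i < j, and lies in the kernel of S^2 iff these satisfy the linear equations
   S^2(phi)(e_a, e_b, e_c) = 0 together with tr X = 0.  An explicit integral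
   solution phi0 is checked directly.  Conversely, starting from the diagonal
   unknowns and one normalising coordinate, and repeatedly using an equation in
   which a single undetermined unknown occurs with a nonzero coefficient, every
   unknown gets determined; applied to phi - c phi0 this shows it vanishes. *)

Section Elimination.
Variable U : eqType.

Definition lform := seq (int * U).

Definition coef (L : lform) (u : U) : int :=
  foldr (fun p s => (if p.2 == u then p.1 else 0) + s) 0 L.

Variable canon : int * U -> int * U.

Definition pivot (S : seq U) (L : lform) : option U :=
  let Q := [seq p <- map canon L | p.2 \notin S] in
  if [seq u <- undup (map snd Q) | coef Q u != 0] is [:: u] then Some u else None.

Definition sweep (pool : seq lform) (S : seq U) : seq U :=
  foldl (fun S L => if pivot S L is Some u then u :: S else S) S pool.

Definition scale_form (k : int) (L : lform) : lform := [seq (k * p.1, p.2) | p <- L].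

Variables (R : numDomainType) (d : U -> R).

Definition leval (L : lform) : R := \sum_(p <- L) p.1%:~R * d p.2.

Lemma leval_cat L1 L2 : leval (L1 ++ L2) = leval L1 + leval L2.
Proof. exact: big_cat. Qed.

Lemma leval_scale k L : leval (scale_form k L) = k%:~R * leval L.
Proof.
by rewrite /leval big_map mulr_sumr; apply: eq_bigr => p _; rewrite intrM mulrA.
Qed.

Lemma coefE L u : coef L u = \sum_(p <- L | p.2 == u) p.1.
Proof.
elim: L => [|p L IH]; first by rewrite big_nil.
by rewrite big_cons /= IH; case: eqP; rewrite ?add0r.
Qed.

Lemma leval_undup L : leval L = \sum_(u <- undup (map snd L)) (coef L u)%:~R * d u.
Proof.
under [RHS]eq_bigr => u _ do rewrite coefE rmorph_sum mulr_suml.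
rewrite (exchange_big_dep predT) //=; apply: eq_big_seq => p pL.
rewrite big_mkcond (bigD1_seq p.2) ?undup_uniq ?mem_undup ?map_f // eqxx.
rewrite big1 /= ?addr0 // => u /negbTE; by rewrite eq_sym => ->.
Qed.

Hypothesis canonP : forall p, (canon p).1%:~R * d (canon p).2 = p.1%:~R * d p.2.

Lemma pivot_sound S L u :
  {in S, forall v, d v = 0} -> leval L = 0 -> pivot S L = Some u -> d u = 0.
Proof.
move=> dS; rewrite /pivot; set Q := [seq p <- map canon L | _].
have -> : leval L = leval Q.
  rewrite /leval big_filter big_map [RHS]big_mkcond; apply: eq_bigr => p _.
  by rewrite -canonP; case: ifP => // /negbFE /dS ->; rewrite mulr0.
rewrite leval_undup (bigID (fun v => coef Q v != 0)) /= [X in _ + X]big1; last first.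
  by move=> v /negbNE /eqP ->; rewrite mul0r.
rewrite addr0 -big_filter.
have : {in [seq v <- undup (map snd Q) | coef Q v != 0], forall v, coef Q v != 0}.
  by move=> v; rewrite mem_filter => /andP [].
case: [seq v <- _ | _] => [|v [|//]] // nz; rewrite big_seq1 => /eqP + [<-].
by rewrite mulf_eq0 intr_eq0 (negbTE (nz v (mem_head _ _))) => /eqP.
Qed.

Lemma sweep_sound pool S :
  {in S, forall v, d v = 0} -> (forall L, L \in pool -> leval L = 0) ->
  {in sweep pool S, forall v, d v = 0}.
Proof.
elim: pool S => [|L pool IH] S dS pool0 //=.
apply: IH => [v|L' L'in]; last by apply: pool0; rewrite inE L'in orbT.
case E: (pivot S L) => [u|]; last exact: dS.
rewrite inE => /predU1P [-> | /dS //].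
by apply: pivot_sound E => //; apply: pool0; rewrite mem_head.
Qed.

Lemma iter_sweep_sound n pool S :
  {in S, forall v, d v = 0} -> (forall L, L \in pool -> leval L = 0) ->
  {in iter n (sweep pool) S, forall v, d v = 0}.
Proof. by move=> dS pool0; elim: n => //= n IH; apply: sweep_sound. Qed.
End Elimination.

Lemma leval_lin (U : eqType) (R : numDomainType) (d1 d2 : U -> R) (a : R) L :
  leval (fun u => d1 u - a * d2 u) L = leval d1 L - a * leval d2 L.
Proof.
rewrite /leval mulr_sumr -sumrB; apply: eq_bigr => p _; ring.
Qed.

Section Bilinear.
Variables (R : comPzRingType) (k m : nat).
Variable phi : 'cV[R]_(Vdim k m) -> 'cV[R]_(Vdim k m) -> aelt R m.
Hypothesis phi_hom : is_Hom2 phi.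

Lemma hom2_0l v : phi 0 v = 0.
Proof.
case: phi_hom => _ linl _ _; have := linl 1 0 0 v; rewrite !scale1r !addr0.
by move/(congr1 (fun y => y - phi 0 v)); rewrite addrK subrr => /esym.
Qed.

Lemma hom2_0r v : phi v 0 = 0.
Proof.
case: phi_hom => _ _ linr _; have := linr 1 v 0 0; rewrite !scale1r !addr0.
by move/(congr1 (fun y => y - phi v 0)); rewrite addrK subrr => /esym.
Qed.

Lemma hom2_suml (I : Type) (s : seq I) (a : I -> R) (x : I -> 'cV[R]_(Vdim k m)) v :
  phi (\sum_(i <- s) a i *: x i) v = \sum_(i <- s) a i *: phi (x i) v.
Proof.
case: phi_hom => _ linl _ _; elim: s => [|i s IH]; first by rewrite !big_nil hom2_0l.
by rewrite !big_cons linl IH.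
Qed.

Lemma hom2_sumr (I : Type) (s : seq I) (a : I -> R) (x : I -> 'cV[R]_(Vdim k m)) v :
  phi v (\sum_(i <- s) a i *: x i) = \sum_(i <- s) a i *: phi v (x i).
Proof.
case: phi_hom => _ _ linr _; elim: s => [|i s IH]; first by rewrite !big_nil hom2_0r.
by rewrite !big_cons linr IH.
Qed.

Lemma hom2_expand u v : phi u v =
  \sum_i \sum_j (u i 0 * v j 0) *: phi (delta_mx i 0) (delta_mx j 0).
Proof.
have col_sum (w : 'cV[R]_(Vdim k m)) : w = \sum_i w i 0 *: delta_mx i 0.
  by rewrite {1}(matrix_sum_delta w); apply: eq_bigr => i _; rewrite big_ord1.
rewrite {1}(col_sum u) hom2_suml; apply: eq_bigr => i _.
by rewrite {1}(col_sum v) hom2_sumr scaler_sumr; apply: eq_bigr => j _; rewrite scalerA.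
Qed.

Lemma hom2_anti u v : phi v u = - phi u v.
Proof.
case: phi_hom => _ linl linr alt.
have addl x y w : phi (x + y) w = phi x w + phi y w by have := linl 1 x y w; rewrite !scale1r.
have addr x y w : phi w (x + y) = phi w x + phi w y by have := linr 1 w x y; rewrite !scale1r.
move: (alt (u + v)); rewrite addl !addr !alt add0r addr0.
by move/(congr1 (fun y => y - phi u v)); rewrite addrAC subrr add0r sub0r.
Qed.

End Bilinear.

(* Coordinates t = 0..7 of (X, Y) in a are X00, X01, X10, X11, Y00, Y01, Y10, Y11;
   the basis vector of V = V_3 (x) W with index r is b_(r/2) (x) w_(r mod 2). *)
Definition coord (R : pzRingType) (x : aelt R 2) (t : nat) : R :=
  match t with
  | 0 => x.1 ord0 ord0 | 1 => x.1 ord0 ord_max | 2 => x.1 ord_max ord0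
  | 3 => x.1 ord_max ord_max
  | 4 => x.2 ord0 ord0 | 5 => x.2 ord0 ord_max | 6 => x.2 ord_max ord0
  | 7 => x.2 ord_max ord_max | _ => 0 end.
Arguments coord : simpl never.

Definition rho_coord (R : pzRingType) (f : nat -> R) (r c : nat) : R :=
  (if r./2 == c./2 then (3 - c./2)%:R * f 0%N + (c./2)%:R * f 3%N
   else if r./2 == (c./2).+1 then (3 - c./2)%:R * f 2%N
   else if (r./2).+1 == c./2 then (c./2)%:R * f 1%N else 0) * (odd r == odd c)%:R
  + (r./2 == c./2)%:R * f (4 + (odd r).*2 + odd c)%N.

Lemma ord2E (i : 'I_2) : i = if odd i then ord_max else ord0.
Proof. by case: i => [[|[|]]] //= ?; apply: val_inj. Qed.

Lemma rhoV_coord (R : comPzRingType) (x : aelt R 2) (r c : 'I_(Vdim 3 2)) :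
  rhoV 3 x r c = rho_coord (coord x) r c.
Proof.
rewrite /rhoV !mxE /=.
have odd_idx (k : 'I_(Vdim 3 2)) :
    Ordinal (mxtens_index_proof2 k) = if odd k then ord_max else ord0.
  by rewrite [LHS]ord2E /= modn2 oddb.
rewrite !odd_idx -!val_eqE /= !divn2 /rho_coord.
by case: (odd r); case: (odd c); rewrite /= ?mxE /coord /=.
Qed.

Lemma coord_inj (R : pzRingType) (x y : aelt R 2) :
  (forall t, (t < 8)%N -> coord x t = coord y t) -> x = y.
Proof.
case: x y => [X Y] [X' Y'] xy.
have -> : X = X'.
  apply/matrixP => i j; rewrite (ord2E i) (ord2E j).
  by case: (odd i); case: (odd j);
    [apply: (xy 3%N) | apply: (xy 2%N) | apply: (xy 1%N) | apply: (xy 0%N)].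
have -> : Y = Y'.
  apply/matrixP => i j; rewrite (ord2E i) (ord2E j).
  by case: (odd i); case: (odd j);
    [apply: (xy 7%N) | apply: (xy 6%N) | apply: (xy 5%N) | apply: (xy 4%N)].
by [].
Qed.

Lemma coord0 (R : pzRingType) t : coord (0 : aelt R 2) t = 0.
Proof. by case: t => [|[|[|[|[|[|[|[|t]]]]]]]]; rewrite /coord /= ?mxE. Qed.

Lemma coordD (R : pzRingType) (x y : aelt R 2) t : coord (x + y) t = coord x t + coord y t.
Proof. by case: t => [|[|[|[|[|[|[|[|t]]]]]]]]; rewrite /coord /= ?mxE ?addr0. Qed.

Lemma coordZ (R : pzRingType) (a : R) (x : aelt R 2) t : coord (a *: x) t = a * coord x t.
Proof. by case: t => [|[|[|[|[|[|[|[|t]]]]]]]]; rewrite /coord /= ?mxE ?mulr0. Qed.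

Lemma coordN (R : pzRingType) (x : aelt R 2) t : coord (- x) t = - coord x t.
Proof. by rewrite -scaleN1r coordZ mulN1r. Qed.

Lemma coord_sum (R : pzRingType) (I : Type) (s : seq I) (F : I -> aelt R 2) t :
  coord (\sum_(i <- s) F i) t = \sum_(i <- s) coord (F i) t.
Proof.
elim: s => [|i s IH]; first by rewrite !big_nil coord0.
by rewrite !big_cons coordD IH.
Qed.

Lemma trace_coord (R : pzRingType) (x : aelt R 2) : \tr x.1 = coord x 0 + coord x 3.
Proof.
rewrite /mxtrace !big_ord_recr big_ord0 /= add0r.
by have -> : widen_ord (leqnSn 1) ord_max = ord0 :> 'I_2 by apply: val_inj.
Qed.

Section RhoCoord.
Variable R : comPzRingType.
Implicit Types f g : nat -> R.

Lemma rho_coord_ext f g r c :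
  (forall t, (t < 8)%N -> f t = g t) -> rho_coord f r c = rho_coord g r c.
Proof. by move=> fg; rewrite /rho_coord !fg //; case: (odd r); case: (odd c). Qed.

Lemma rho_coord0 r c : rho_coord (fun _ => 0 : R) r c = 0.
Proof. by rewrite /rho_coord; case: ifP => _; last case: ifP => _; last case: ifP => _; ring. Qed.

Lemma rho_coordD f g r c :
  rho_coord (fun t => f t + g t) r c = rho_coord f r c + rho_coord g r c.
Proof. by rewrite /rho_coord; case: ifP => _; last case: ifP => _; last case: ifP => _; ring. Qed.

Lemma rho_coordZ (a : R) f r c : rho_coord (fun t => a * f t) r c = a * rho_coord f r c.
Proof. by rewrite /rho_coord; case: ifP => _; last case: ifP => _; last case: ifP => _; ring. Qed.

Lemma rho_coord_sum (I : Type) (s : seq I) (F : I -> nat -> R) r c :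
  rho_coord (fun t => \sum_(i <- s) F i t) r c = \sum_(i <- s) rho_coord (F i) r c.
Proof.
elim: s => [|i s IH].
  rewrite big_nil -[RHS](rho_coord0 r c); apply: rho_coord_ext => t _; exact: big_nil.
by rewrite big_cons -IH -rho_coordD; apply: rho_coord_ext => t _; rewrite big_cons.
Qed.

End RhoCoord.

Lemma rmorph_rho_coord (R S : comPzRingType) (h : {rmorphism R -> S}) (f : nat -> R) r c :
  h (rho_coord f r c) = rho_coord (h \o f) r c.
Proof.
by rewrite /rho_coord; case: ifP => _; last case: ifP => _; last case: ifP => _;
  rewrite /= ?(rmorphD, rmorphM, rmorph_nat, rmorph0).
Qed.

Definition weight (r c t : nat) : int := rho_coord (fun s => (s == t)%:R) r c.

Lemma rho_coordE (R : comPzRingType) (f : nat -> R) r c :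
  rho_coord f r c = \sum_(t <- iota 0 8) (weight r c t)%:~R * f t.
Proof.
transitivity (rho_coord (fun s => \sum_(t <- iota 0 8) f t * ((s == t)%:R : int)%:~R) r c).
  apply: rho_coord_ext => s s_lt8.
  rewrite (bigD1_seq s) ?mem_iota ?iota_uniq //= eqxx mulr1 big1 ?addr0 // => t.
  by rewrite eq_sym => /negbTE ->; rewrite mulr0.
rewrite rho_coord_sum; apply: eq_bigr => t _.
by rewrite rho_coordZ mulrC /weight rmorph_rho_coord.
Qed.

Definition spencer_coord (R : pzRingType) (y : nat -> nat -> nat -> R) (a b c r : nat) : R :=
  - rho_coord (y b c) r a + rho_coord (y a c) r b - rho_coord (y a b) r c.

Lemma rmorph_spencer_coord (R S : comPzRingType) (h : {rmorphism R -> S}) y a b c r :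
  h (spencer_coord y a b c r) = spencer_coord (fun i j => h \o y i j) a b c r.
Proof. by rewrite /spencer_coord rmorphB rmorphD rmorphN !rmorph_rho_coord. Qed.

Definition bvec (R : pzRingType) (i : nat) : 'cV[R]_(Vdim 3 2) := delta_mx (inord i) 0.

Lemma spencer2_bvec (R : comPzRingType) phi a b c r :
  (a < 8)%N -> (b < 8)%N -> (c < 8)%N -> (r < 8)%N ->
  spencer2 phi (bvec R a) (bvec R b) (bvec R c) (inord r) 0 =
  spencer_coord (fun i j => coord (phi (bvec R i) (bvec R j))) a b c r.
Proof.
have sum_bvec (A : 'M[R]_(Vdim 3 2)) r' c' : \sum_j A r' j * bvec R c' j 0 = A r' (inord c').
  have : (A *m bvec R c') r' 0 = A r' (inord c') by rewrite /bvec -colE mxE.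
  by rewrite mxE.
by move=> *; rewrite /spencer2 !mxE !sum_bvec !rhoV_coord !inordK.
Qed.

(* The unknown (i, j, t) is the coordinate t of phi(e_i, e_j). *)
Definition unknown := (nat * nat * nat)%type.

Definition spencer_form (a b c r : nat) : lform unknown :=
  [seq (- weight r a t, (b, c, t)) | t <- iota 0 8]
  ++ [seq (weight r b t, (a, c, t)) | t <- iota 0 8]
  ++ [seq (- weight r c t, (a, b, t)) | t <- iota 0 8].

Definition trace_form (i j : nat) : lform unknown := [:: (1, (i, j, 0%N)); (1, (i, j, 3%N))].

Inductive kernel_eq :=
  | SpencerEq of nat & nat & nat & nat
  | TraceEq of nat & nat
  | CartanEq of nat & nat & nat & nat.

(* For even e1 < e2 outside {i, j}, the gl(W)-coordinates of phi(e_i, e_j) cancel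
   in the difference of the Spencer equations at rows e1 and e2, and adding the
   trace condition isolates the coordinate (i, j, 0). *)
Definition eq_form (e : kernel_eq) : lform unknown :=
  match e with
  | SpencerEq a b c r => spencer_form a b c r
  | TraceEq i j => trace_form i j
  | CartanEq e1 e2 i j =>
      scale_form (-1) (spencer_form e1 i j e1) ++ spencer_form e2 i j e2
      ++ scale_form ((e2 - e1)./2)%:Z (trace_form i j)
  end.

Definition eq_bounded (e : kernel_eq) : bool :=
  match e with
  | SpencerEq a b c r => [&& a < 8, b < 8, c < 8 & r < 8]%N
  | TraceEq _ _ => true
  | CartanEq e1 e2 i j => [&& e1 < 8, e2 < 8, i < 8 & j < 8]%N
  end.

Lemma leval_spencer_form (R : numDomainType) (z : unknown -> R) a b c r :
  leval z (spencer_form a b c r) = spencer_coord (fun i j t => z (i, j, t)) a b c r.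
Proof.
rewrite /spencer_coord !rho_coordE !leval_cat /leval !big_map addrA -!sumrN.
by congr (_ + _ + _); apply: eq_bigr => t _; rewrite ?intrN ?mulNr.
Qed.

Lemma eq_form_sound (R : numDomainType) (z : unknown -> R) :
  (forall a b c r, (a < 8)%N -> (b < 8)%N -> (c < 8)%N -> (r < 8)%N ->
     spencer_coord (fun i j t => z (i, j, t)) a b c r = 0) ->
  (forall i j, z (i, j, 0%N) + z (i, j, 3%N) = 0) ->
  forall e, eq_bounded e -> leval z (eq_form e) = 0.
Proof.
move=> zS zT.
have zT' i j : leval z (trace_form i j) = 0.
  by rewrite /leval !big_cons big_nil /= !mulr1z !mul1r addr0.
case=> [a b c r /and4P [*] | i j _ | e1 e2 i j /and4P [*]]; first by rewrite leval_spencer_form zS.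
  exact: zT'.
rewrite leval_cat leval_scale [leval _ (spencer_form e2 _ _ _ ++ _)]leval_cat leval_scale.
by rewrite !leval_spencer_form zT' !zS // !mulr0 !addr0.
Qed.

Definition canon_term (p : int * unknown) : int * unknown :=
  let: (k, (i, j, t)) := p in if (j < i)%N then (- k, (j, i, t)) else p.

Definition idx := iota 0 8.
Definition upper_pairs_of (s : seq nat) := [seq p <- [seq (i, j) | i <- s, j <- s] | (p.1 < p.2)%N].
Definition upper_pairs := upper_pairs_of idx.
Definition triples : seq unknown := [seq (p, t) | p <- [seq (i, j) | i <- idx, j <- idx], t <- idx].

Definition equations : seq kernel_eq :=
  [seq SpencerEq u.1.1 u.1.2 u.2 r | u <- [seq u <- triples | (u.1.1 < u.1.2 < u.2)%N], r <- idx]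
  ++ [seq TraceEq p.1 p.2 | p <- upper_pairs]
  ++ [seq CartanEq e.1 e.2 p.1 p.2 | e <- upper_pairs_of [:: 0; 2; 4; 6]%N, p <- upper_pairs].

Definition seed : seq unknown := (4, 5, 2)%N :: [seq u <- triples | u.1.1 == u.1.2].

Definition solved : seq unknown := iter 3 (sweep canon_term (map eq_form equations)) seed.

Lemma equations_bounded : all eq_bounded equations.
Proof. by vm_compute. Qed.

Lemma solved_covers : all (fun u => (canon_term (1, u)).2 \in solved) triples.
Proof. by vm_compute. Qed.

(* The solution of the linear system with coordinate (4, 5, 2) normalised to 4. *)
Definition phi0_coef_lt (i j t : nat) : int :=
  match i, j, t with
  | 0, 5, 1 => 6 | 0, 6, 5 => 18 | 0, 7, 0 => -9 | 0, 7, 3 => 9 | 0, 7, 4 => -9 | 0, 7, 7 => 9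
  | 1, 4, 1 => -6 | 1, 6, 0 => 9 | 1, 6, 3 => -9 | 1, 6, 4 => -9 | 1, 6, 7 => 9 | 1, 7, 6 => -18
  | 2, 3, 1 => -4 | 2, 4, 5 => -6 | 2, 5, 0 => 1 | 2, 5, 3 => -1 | 2, 5, 4 => 3 | 2, 5, 7 => -3
  | 2, 7, 2 => -6
  | 3, 4, 0 => -1 | 3, 4, 3 => 1 | 3, 4, 4 => 3 | 3, 4, 7 => -3 | 3, 5, 6 => 6 | 3, 6, 2 => 6
  | 4, 5, 2 => 4
  | _, _, _ => 0
  end.

Definition phi0_coef (i j t : nat) : int :=
  if (i < j)%N then phi0_coef_lt i j t else if (j < i)%N then - phi0_coef_lt j i t else 0.

Lemma phi0_coef_anti i j t : phi0_coef j i t = - phi0_coef i j t.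
Proof. by rewrite /phi0_coef; case: ltngtP; rewrite ?opprK ?oppr0. Qed.

Lemma phi0_coef_trace i j : phi0_coef i j 0 + phi0_coef i j 3 = 0.
Proof.
have trace_lt k l : phi0_coef_lt k l 0 + phi0_coef_lt k l 3 = 0.
  by case: k => [|[|[|[|[|k]]]]]; case: l => [|[|[|[|[|[|[|[|l]]]]]]]].
rewrite /phi0_coef; case: ifP => _; first exact: trace_lt.
by case: ifP => _; rewrite ?addr0 // -opprD trace_lt oppr0.
Qed.

Lemma phi0_coef_spencer a b c r : (a < 8)%N -> (b < 8)%N -> (c < 8)%N -> (r < 8)%N ->
  spencer_coord phi0_coef a b c r = 0.
Proof.
have all_zero : all (fun a => all (fun b => all (fun c => all (fun r =>
  spencer_coord phi0_coef a b c r == 0) idx) idx) idx) idx by vm_compute.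
move=> a8 b8 c8 r8; have mem8 n : (n < 8)%N -> n \in idx by rewrite mem_iota.
move: all_zero => /allP/(_ a (mem8 a a8)) /allP/(_ b (mem8 b b8)).
by move=> /allP/(_ c (mem8 c c8)) /allP/(_ r (mem8 r r8)) /eqP.
Qed.

Definition phi0_val (R : pzRingType) (i j : nat) : aelt R 2 :=
  (\matrix_(p < 2, q < 2) (phi0_coef i j (2 * p + q))%:~R,
   \matrix_(p < 2, q < 2) (phi0_coef i j (4 + 2 * p + q))%:~R).

Lemma coord_phi0_val (R : pzRingType) i j t :
  (t < 8)%N -> coord (phi0_val R i j) t = (phi0_coef i j t)%:~R.
Proof. by case: t => [|[|[|[|[|[|[|[|t]]]]]]]] //= _; rewrite /coord /= mxE. Qed.

Definition phi0 (R : pzRingType) (u v : 'cV[R]_(Vdim 3 2)) : aelt R 2 :=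
  \sum_(i < Vdim 3 2) \sum_(j < Vdim 3 2) (u i 0 * v j 0) *: phi0_val R i j.

Lemma coord_phi0 (R : pzRingType) u v t : (t < 8)%N ->
  coord (phi0 u v) t =
  \sum_(i < Vdim 3 2) \sum_(j < Vdim 3 2) u i 0 * v j 0 * (phi0_coef i j t)%:~R :> R.
Proof.
move=> t8; rewrite /phi0 coord_sum; apply: eq_bigr => i _.
by rewrite coord_sum; apply: eq_bigr => j _; rewrite coordZ coord_phi0_val.
Qed.

Lemma phi0_basis (R : pzRingType) (i j : 'I_(Vdim 3 2)) :
  phi0 (delta_mx i 0) (delta_mx j 0) = phi0_val R i j.
Proof.
apply: coord_inj => t t8; rewrite coord_phi0 // coord_phi0_val //.
have e_sum (k : 'I_(Vdim 3 2)) (F : 'I_(Vdim 3 2) -> R) :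
    \sum_l (delta_mx k 0 : 'cV[R]_(Vdim 3 2)) l 0 * F l = F k.
  rewrite (bigD1 k) //= mxE !eqxx mul1r big1 ?addr0 // => l /negbTE lk.
  by rewrite mxE lk mul0r.
rewrite -(e_sum i (fun k => (phi0_coef k j t)%:~R)); apply: eq_bigr => k _.
rewrite -(e_sum j (fun l => (phi0_coef k l t)%:~R)) mulr_sumr.
by apply: eq_bigr => l _; rewrite mulrA.
Qed.

Lemma rhoV_phi0 (R : comPzRingType) (u w : 'cV[R]_(Vdim 3 2)) (r a : 'I_(Vdim 3 2)) :
  rhoV 3 (phi0 u w) r a =
  \sum_(i < Vdim 3 2) \sum_(j < Vdim 3 2) u i 0 * w j 0 * (rho_coord (phi0_coef i j) r a)%:~R.
Proof.
rewrite rhoV_coord (@rho_coord_ext _ _ (fun t => \sum_(i < Vdim 3 2) \sum_(j < Vdim 3 2)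
   u i 0 * w j 0 * (phi0_coef i j t)%:~R)); last by move=> t t8; rewrite coord_phi0.
rewrite rho_coord_sum; apply: eq_bigr => i _; rewrite rho_coord_sum; apply: eq_bigr => j _.
by rewrite rho_coordZ rmorph_rho_coord.
Qed.

Lemma spencer2_phi0 (R : comPzRingType) (v1 v2 v3 : 'cV[R]_(Vdim 3 2)) :
  spencer2 (@phi0 R) v1 v2 v3 = 0.
Proof.
apply/matrixP => r z; rewrite [z]ord1 /spencer2 !mxE.
pose P (a b c : 'I_(Vdim 3 2)) := v1 a 0 * v2 b 0 * v3 c 0.
pose rk (i j a : 'I_(Vdim 3 2)) : R := (rho_coord (phi0_coef i j) r a)%:~R.
have S1 : \sum_a rhoV 3 (phi0 v2 v3) r a * v1 a 0 =
    \sum_a \sum_b \sum_c P a b c * rk b c a.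
  apply: eq_bigr => a _; rewrite rhoV_phi0 mulr_suml; apply: eq_bigr => b _.
  by rewrite mulr_suml; apply: eq_bigr => c _; rewrite /P /rk; ring.
have S2 : \sum_b rhoV 3 (phi0 v1 v3) r b * v2 b 0 =
    \sum_a \sum_b \sum_c P a b c * rk a c b.
  rewrite [RHS]exchange_big; apply: eq_bigr => b _; rewrite rhoV_phi0 mulr_suml.
  apply: eq_bigr => a _; rewrite mulr_suml; apply: eq_bigr => c _; rewrite /P /rk; ring.
have S3 : \sum_c rhoV 3 (phi0 v1 v2) r c * v3 c 0 =
    \sum_a \sum_b \sum_c P a b c * rk a b c.
  under [RHS]eq_bigr => a _ do rewrite exchange_big.
  rewrite [RHS]exchange_big; apply: eq_bigr => c _; rewrite rhoV_phi0 mulr_suml.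
  apply: eq_bigr => a _; rewrite mulr_suml; apply: eq_bigr => b _; rewrite /P /rk; ring.
have sum3 (I : Type) (s : seq I) (F1 F2 F3 : I -> R) :
    - \sum_(i <- s) F1 i + \sum_(i <- s) F2 i - \sum_(i <- s) F3 i =
    \sum_(i <- s) (- F1 i + F2 i - F3 i).
  by rewrite -sumrN -big_split -sumrB.
rewrite S1 S2 S3 sum3 big1 // => a _; rewrite sum3 big1 // => b _; rewrite sum3 big1 // => c _.
have -> : - (P a b c * rk b c a) + P a b c * rk a c b - P a b c * rk a b c =
    P a b c * (spencer_coord phi0_coef a b c r)%:~R.
  by rewrite /rk /spencer_coord !(intrB, intrD, intrN); ring.
by rewrite phi0_coef_spencer ?ltn_ord // mulr0.
Qed.

Lemma phi0_hom (R : numDomainType) : is_Hom2 (@phi0 R).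
Proof.
split.
- move=> u v; rewrite /in_a trace_coord !coord_phi0 // -big_split big1 // => i _.
  rewrite -big_split big1 // => j _.
  by rewrite /= -mulrDr -intrD phi0_coef_trace mulr0.
- move=> c u u' v; apply: coord_inj => t t8.
  rewrite coordD coordZ !coord_phi0 // mulr_sumr -big_split; apply: eq_bigr => i _.
  rewrite mulr_sumr -big_split; apply: eq_bigr => j _; rewrite !mxE /=; ring.
- move=> c u v v'; apply: coord_inj => t t8.
  rewrite coordD coordZ !coord_phi0 // mulr_sumr -big_split; apply: eq_bigr => i _.
  rewrite mulr_sumr -big_split; apply: eq_bigr => j _; rewrite !mxE /=; ring.
- move=> u; apply: coord_inj => t t8; rewrite coord0 coord_phi0 //.
  set S := \sum_i _.
  have S_opp : S = - S.
    rewrite {1}/S exchange_big /S -sumrN; apply: eq_bigr => i _.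
    by rewrite -sumrN; apply: eq_bigr => j _; rewrite phi0_coef_anti intrN; ring.
  have : S *+ 2 = 0 by rewrite mulr2n {1}S_opp addNr.
  by move/eqP; rewrite mulrn_eq0 => /eqP.
Qed.

Lemma phi0_in_ker (R : numDomainType) : in_ker_spencer2 (@phi0 R).
Proof. by split; [exact: phi0_hom | exact: spencer2_phi0]. Qed.

Lemma eq_forms_trivial (R : numDomainType) (d : unknown -> R) :
  (forall i j t, d (j, i, t) = - d (i, j, t)) -> d (4, 5, 2)%N = 0 ->
  (forall e, eq_bounded e -> leval d (eq_form e) = 0) ->
  forall i j t, (i < 8)%N -> (j < 8)%N -> (t < 8)%N -> d (i, j, t) = 0.
Proof.
move=> d_anti d452 d_form.
have d_diag i t : d (i, i, t) = 0.
  by move/eqP: (d_anti i i t); rewrite -addr_eq0 -mulr2n mulrn_eq0 => /eqP.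
have d_canon p : (canon_term p).1%:~R * d (canon_term p).2 = p.1%:~R * d p.2.
  by case: p => n [[i j] t] /=; case: ifP => // _ /=; rewrite d_anti intrN mulrNN.
have d_seed : {in seed, forall u, d u = 0}.
  move=> u; rewrite inE => /predU1P [-> // | ].
  by rewrite mem_filter => /andP [/eqP + _]; case: u => [[i j] t] /= ->.
have d_eqs L : L \in map eq_form equations -> leval d L = 0.
  elim: equations equations_bounded => [|e es IH] //= /andP [e_bd es_bd].
  by rewrite inE => /predU1P [-> | /(IH es_bd)]; first exact: d_form.
move=> i j t i8 j8 t8.
have ijt_in : (i, j, t) \in triples by rewrite !allpairs_f // mem_iota.
have := d_canon (1, (i, j, t)).
rewrite (iter_sweep_sound (n := 3) d_canon d_seed d_eqs) ?mulr0; last exact: (allP solved_covers).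
by rewrite mul1r => /esym.
Qed.

Lemma ker_spencer2_forms (R : numDomainType) phi : in_ker_spencer2 phi ->
  forall e, eq_bounded e ->
  leval (fun u => coord (phi (bvec R u.1.1) (bvec R u.1.2)) u.2) (eq_form e) = 0.
Proof.
move=> [[tr0 _ _ _] phi_sp]; apply: eq_form_sound => [a b c r * | i j].
  by rewrite -spencer2_bvec ?phi_sp ?mxE.
by rewrite -trace_coord; apply: tr0.
Qed.

Lemma phi0_coef_forms (R : numDomainType) e : eq_bounded e ->
  leval (fun u => (phi0_coef u.1.1 u.1.2 u.2)%:~R : R) (eq_form e) = 0.
Proof.
apply: eq_form_sound => [a b c r * | i j].
  by rewrite -(rmorph_spencer_coord intr) phi0_coef_spencer.
by rewrite -intrD phi0_coef_trace.
Qed.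

Lemma ker_spencer2_coord (R : numFieldType) phi : in_ker_spencer2 phi ->
  forall i j t, (i < 8)%N -> (j < 8)%N -> (t < 8)%N ->
  coord (phi (bvec R i) (bvec R j)) t =
  coord (phi (bvec R 4) (bvec R 5)) 2 / 4 * (phi0_coef i j t)%:~R.
Proof.
move=> phi_ker i j t i8 j8 t8; apply/eqP; rewrite -subr_eq0; apply/eqP.
set c := _ / 4.
pose x (u : unknown) := coord (phi (bvec R u.1.1) (bvec R u.1.2)) u.2.
pose y (u : unknown) : R := (phi0_coef u.1.1 u.1.2 u.2)%:~R.
apply: (@eq_forms_trivial _ (fun u => x u - c * y u)) => // [i' j' t' | | e e_bd].
- by rewrite /x /y /= (hom2_anti phi_ker.1) coordN phi0_coef_anti intrN; ring.
- by rewrite /x /y /c /= divfK ?subrr // pnatr_eq0.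
- by rewrite leval_lin ker_spencer2_forms // phi0_coef_forms // mulr0 subr0.
Qed.

Lemma ker_spencer2_bvec (R : numFieldType) phi : in_ker_spencer2 phi ->
  forall i j, (i < 8)%N -> (j < 8)%N ->
  phi (bvec R i) (bvec R j) = coord (phi (bvec R 4) (bvec R 5)) 2 / 4 *: phi0_val R i j.
Proof.
move=> phi_ker i j i8 j8; apply: coord_inj => t t8.
by rewrite coordZ coord_phi0_val // ker_spencer2_coord.
Qed.

Theorem lemma5 (R : realType) :
  one_dimensional (@in_ker_spencer2 R 3 2).
Proof.
exists (@phi0 R); split; first exact: phi0_in_ker.
  exists (bvec R 4), (bvec R 5); rewrite phi0_basis !inordK // => /(congr1 (fun x => coord x 2)).
  by rewrite coord_phi0_val // coord0 /=; apply/eqP; rewrite pnatr_eq0.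
move=> phi phi_ker; exists (coord (phi (bvec R 4) (bvec R 5)) 2 / 4) => u v.
rewrite (hom2_expand phi_ker.1 u v) /phi0 scaler_sumr; apply: eq_bigr => i _.
rewrite scaler_sumr; apply: eq_bigr => j _.
have bvecE (l : 'I_(Vdim 3 2)) : delta_mx l 0 = bvec R l by rewrite /bvec inord_val.
by rewrite !bvecE ker_spencer2_bvec ?ltn_ord // !scalerA mulrC.
Qed.
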